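(* For each of the following groups $G$ of order $24$ there exists a $(G,[1^3,2^2,17],12)$ Hadamard partitioned difference family: (a) $C_3\rtimes C_8=\langle a,b \mid a^8=b^3=1,\ ab^{-1}=ba\rangle$; (b) $SL(2,3)$, the group of $2\times 2$ matrices over $\mathbb{Z}_3$ of determinant $1$; (c) $\mathbb{Z}_3\times D_8$.
   Context: For a finite group $G$ (written additively, or multiplicatively in which case the difference of $x$ and $y$ is $xy^{-1}$), and $B\subseteq G$, $\Delta B$ is the multiset of differences of ordered pairs of distinct elements of $B$; for $\mathcal{F}=\{B_1,\dots,B_t\}$, $\Delta\mathcal{F}$ is the multiset union of the $\Delta B_i$. $\mathcal{F}$ is a $(G,[k_1,\dots,k_t],\lambda)$ partitioned difference family if the $B_i$ partition $G$, $|B_i|=k_i$, and $\Delta\mathcal{F}$ contains every non-identity element of $G$ exactly $\lambda$ times; it is Hadamard if $|G|=2\lambda$. Exponents in $[1^3,2^2,17]$ denote multiplicities (three blocks of size 1, two of size 2, one of size 17). $D_{2n}=\langle x,y\mid x^n=1,\ y^2=1,\ yx^i=x^{-i}y\rangle$ is the dihedral group of order $2n$, so $D_8$ has order $8$. *)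

From mathcomp Require Import all_boot all_order all_algebra all_fingroup all_solvable.
Set Implicit Arguments.
Unset Strict Implicit.
Unset Printing Implicit Defensive.

Local Open Scope group_scope.

Section PDF.
Variable gT : finGroupType.

Definition diff_mult (B : {set gT}) (g : gT) : nat :=
  #|[set p in setX B B | (p.1 != p.2) && (p.1 * p.2^-1 == g)]|.

Definition diff_mult_fam (F : seq {set gT}) (g : gT) : nat :=
  \sum_(B <- F) diff_mult B g.

Definition is_pdf (G : {set gT}) (ks : seq nat) (lambda : nat)
    (F : seq {set gT}) : Prop :=
  [/\ \bigcup_(B <- F) (B : {set gT}) = G,
      (forall i j, (i < size F)%N -> (j < size F)%N -> i != j ->
          [disjoint (nth set0 F i : {set gT}) & (nth set0 F j : {set gT})]),
      map (fun B : {set gT} => #|B|) F = ks &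
      (forall g, g \in G -> g != 1 -> diff_mult_fam F g = lambda)].

Definition hadamard_pdf_exists (G : {set gT}) (ks : seq nat) (lambda : nat)
    : Prop :=
  #|G| = (2 * lambda)%N /\ exists F : seq {set gT}, is_pdf G ks lambda F.

End PDF.

Definition SL23 : {set {'GL_2(3)}} :=
  [set g : {'GL_2(3)} | (\det (GLval g) == 1)%R].

Definition ks_1_1_1_2_2_17 : seq nat := [:: 1; 1; 1; 2; 2; 17]%N.

From mathcomp Require Import all_boot all_order all_algebra all_fingroup all_solvable zify.
Set Implicit Arguments.
Unset Strict Implicit.
Unset Printing Implicit Defensive.
Import GRing.Theory.

(* Each of the three groups is enumerated as g_0 = 1, g_1, ..., g_23 so that
   the multiplication becomes an explicit table on the indices 0..23; the
   six blocks of the family are then lists of indices, and the partition and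
   difference conditions are checked by computation on the table.  For the
   metacyclic groups the enumeration is the normal form a^q b^p, using
   Z_3 x D_8 = C_12 x| C_2; for SL(2,3) it is the list of the 24 unimodular
   matrices over F_3.  For the group given by a presentation, the 24 normal
   forms exhaust G, and G has order 24 because it maps onto C_8 and onto
   S_3 = D_6. *)

Lemma divnMDmod d x y : 0 < d -> (x * d + y %% d) %/ d = x.
Proof. by move=> d_gt0; rewrite divnMDl // divn_small ?addn0 ?ltn_mod. Qed.

Lemma modnMDmod d x y : (x * d + y %% d) %% d = y %% d.
Proof. by rewrite modnMDl modn_mod. Qed.

Lemma uniq_flatten_disjoint (T : eqType) (ss : seq (seq T)) i j x :
  uniq (flatten ss) -> i != j -> x \in nth [::] ss i -> x \notin nth [::] ss j.
Proof.
wlog lt_ij : i j / i < j.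
  move=> wlog_ij u_ss ne_ij; have [lt_ij|lt_ji|eq_ij] := ltngtP i j.
  - exact: wlog_ij.
  - by move=> xi; apply: contraL xi; apply: wlog_ij; rewrite // eq_sym.
  - by rewrite eq_ij eqxx in ne_ij.
move=> u_ss _ xi; apply/negP => xj.
have lt_j : j < size ss by rewrite ltnNge; apply: contraL xj => /(nth_default [::])->.
rewrite -(cat_take_drop j ss) flatten_cat cat_uniq in u_ss.
case/and3P: u_ss => _ /hasPn disj _.
have xdrop : x \in flatten (drop j ss).
  by apply/flattenP; exists (nth [::] ss j); rewrite // (drop_nth [::] lt_j) mem_head.
have xtake : x \in flatten (take j ss).
  apply/flattenP; exists (nth [::] ss i) => //.
  by rewrite -(nth_take _ lt_ij) mem_nth // size_take lt_j.
by move: (disj x xdrop); rewrite xtake.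
Qed.

Local Open Scope group_scope.

Lemma diff_mult_seq (gT : finGroupType) (s : seq gT) (g : gT) : uniq s ->
  diff_mult [set x in s] g =
  count (fun p : gT * gT => (p.1 != p.2) && (p.1 * p.2^-1 == g)) [seq (x, y) | x <- s, y <- s].
Proof.
move=> s_uniq; rewrite -size_filter -(card_uniqP _); last first.
  by rewrite filter_uniq // allpairs_uniq // => -[? ?] [? ?].
apply: eq_card => -[x y]; rewrite !inE mem_filter /= andbC.
by congr (_ && _); apply/andP/allpairsP => [[xs ys]|[[x' y'] [/= ? ? [-> ->]]]];
  [exists (x, y) | split].
Qed.

Definition decode (gT : finGroupType) (e : nat -> gT) (c : seq nat) : {set gT} :=
  [set x in map e c].

Lemma bigcup_decode (gT : finGroupType) (e : nat -> gT) (F : seq (seq nat)) :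
  \bigcup_(B <- map (decode e) F) B = decode e (flatten F).
Proof.
elim: F => [|c F IH]; first by rewrite big_nil; apply/setP => x; rewrite !inE.
by rewrite big_cons IH; apply/setP => x; rewrite !inE map_cat mem_cat.
Qed.

Lemma card_decode_le (gT : finGroupType) (e : nat -> gT) (c : seq nat) :
  (#|decode e c| <= size c)%N.
Proof.
by rewrite -(size_map e) -(@eq_card _ (mem (map e c))) ?card_size // => x; rewrite inE.
Qed.

Section Codes.
Variables (n : nat) (mul : nat -> nat -> nat).

(* [find] returns [n] when [j] has no right inverse; [group_table] rules
   this out. *)
Definition code_inv (j : nat) : nat := find (fun k => mul j k == 0) (iota 0 n).

Definition code_div (i j : nat) : nat := mul i (code_inv j).

Definition code_diff_mult (c : seq nat) (k : nat) : nat :=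
  count (fun ij : nat * nat => (ij.1 != ij.2) && (code_div ij.1 ij.2 == k))
    [seq (i, j) | i <- c, j <- c].

Definition group_table : bool :=
  [&& 0 < n, mul 0 0 == 0,
      all (fun i => all (fun j => mul i j < n) (iota 0 n)) (iota 0 n) &
      all (fun j => (code_inv j < n) && (mul j (code_inv j) == 0)) (iota 0 n)]%N.

Definition code_pdf (ks : seq nat) (lambda : nat) (F : seq (seq nat)) : bool :=
  [&& perm_eq (flatten F) (iota 0 n), map size F == ks &
      all (fun k => sumn [seq code_diff_mult c k | c <- F] == lambda) (iota 1 n.-1)].

Section Decoding.
Variables (gT : finGroupType) (e : nat -> gT).
Hypothesis table : group_table.
Hypothesis eM : forall i j, (i < n)%N -> (j < n)%N -> e i * e j = e (mul i j).
Hypothesis e_inj : {in gtn n &, injective e}.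

Let codeP i : reflect (i < n)%N (i \in iota 0 n).
Proof. by rewrite mem_iota; apply: idP. Qed.

Lemma code_mul_lt i j : (i < n)%N -> (j < n)%N -> (mul i j < n)%N.
Proof.
case/and4P: table => _ _ /allP tabM _ /codeP lt_i /codeP lt_j.
by have /allP := tabM i lt_i; apply.
Qed.

Lemma code_inv_spec j : (j < n)%N -> (code_inv j < n)%N /\ mul j (code_inv j) = 0%N.
Proof. by case/and4P: table => _ _ _ /allP tabV /codeP /tabV /andP[-> /eqP]. Qed.

Lemma code_e0 : e 0 = 1.
Proof.
case/and4P: table => n_gt0 /eqP mul00 _ _.
by apply: (mulgI (e 0)); rewrite mulg1 eM // mul00.
Qed.

Lemma code_div_lt i j : (i < n)%N -> (j < n)%N -> (code_div i j < n)%N.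
Proof. by move=> lt_i /code_inv_spec[lt_j' _]; apply: code_mul_lt. Qed.

Lemma code_divE i j : (i < n)%N -> (j < n)%N -> e i * (e j)^-1 = e (code_div i j).
Proof.
move=> lt_i lt_j; have [lt_j' mul_jj'] := code_inv_spec lt_j.
suff -> : (e j)^-1 = e (code_inv j) by rewrite eM.
by apply/eqP; rewrite eq_invg_mul eM // mul_jj' code_e0.
Qed.

Lemma code_eqE i j : (i < n)%N -> (j < n)%N -> (e i == e j) = (i == j).
Proof. by move=> lt_i lt_j; apply/eqP/eqP => [|->]; first exact: e_inj. Qed.

Section Block.
Variable c : seq nat.
Hypotheses (c_uniq : uniq c) (c_codes : {subset c <= iota 0 n}).

Let c_lt i : i \in c -> (i < n)%N.
Proof. by move/c_codes/codeP. Qed.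

Lemma decode_uniq : uniq (map e c).
Proof. by rewrite map_inj_in_uniq // => i j /c_lt lt_i /c_lt lt_j; apply: e_inj. Qed.

Lemma card_decode : #|decode e c| = size c.
Proof.
rewrite -(size_map e) -(card_uniqP decode_uniq).
by apply: eq_card => x; rewrite inE.
Qed.

Lemma diff_mult_decode k : (k < n)%N -> diff_mult (decode e c) (e k) = code_diff_mult c k.
Proof.
move=> lt_k; rewrite diff_mult_seq ?decode_uniq //.
have -> : [seq (x, y) | x <- map e c, y <- map e c] =
          map (fun p => (e p.1, e p.2)) [seq (i, j) | i <- c, j <- c].
  by rewrite map_allpairs allpairs_mapl allpairs_mapr.
rewrite count_map; apply: eq_in_count => -[i j].
case/allpairsP=> -[i' j'] [/c_lt lt_i /c_lt lt_j [-> ->]].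
by rewrite /= code_eqE // code_divE // code_eqE // code_div_lt.
Qed.

End Block.

Lemma is_pdf_decode ks lambda F :
  code_pdf ks lambda F -> is_pdf (decode e (iota 0 n)) ks lambda (map (decode e) F).
Proof.
case/and3P=> perm_F /eqP size_F /allP diff_F.
have n_gt0 : (0 < n)%N by case/and4P: table.
have F_uniq : uniq (flatten F) by rewrite (perm_uniq perm_F) iota_uniq.
have F_codes c : c \in F -> {subset c <= iota 0 n}.
  by move=> cF i ic; rewrite -(perm_mem perm_F); apply/flattenP; exists c.
have F_c_uniq c : c \in F -> uniq c.
  move=> cF; move: F_uniq.
  by rewrite (perm_uniq (perm_flatten (perm_to_rem cF))) /= cat_uniq => /andP[].
split.
- by rewrite bigcup_decode; apply/setP => x; rewrite !inE; apply: eq_mem_map; apply: perm_mem.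
- move=> i j; rewrite size_map => lt_i lt_j ne_ij; rewrite !(nth_map [::]) //.
  rewrite -setI_eq0; apply/eqP/setP => x; rewrite !inE.
  apply/negbTE/negP => /andP[/mapP[a ai ->] /mapP[b bj]].
  have lt_a : (a < n)%N by apply/codeP/(F_codes _ (mem_nth [::] lt_i)).
  have lt_b : (b < n)%N by apply/codeP/(F_codes _ (mem_nth [::] lt_j)).
  move/(e_inj lt_a lt_b) => eq_ab; rewrite eq_ab in ai.
  by case/negP: (uniq_flatten_disjoint F_uniq ne_ij ai).
- rewrite -map_comp -size_F; apply/eq_in_map => c cF /=.
  exact: card_decode (F_c_uniq c cF) (F_codes c cF).
- move=> g; rewrite inE => /mapP[k /codeP lt_k ->]; rewrite -code_e0 code_eqE // => nz_k.
  rewrite /diff_mult_fam big_map (eq_big_seq (code_diff_mult^~ k)) => [|c cF]; last first.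
    exact: diff_mult_decode (F_c_uniq c cF) (F_codes c cF) _ lt_k.
  rewrite -(big_map _ xpredT id) -sumnE; apply/eqP/diff_F.
  by rewrite mem_iota add1n prednK // lt0n nz_k.
Qed.

End Decoding.

Lemma code_hadamard_pdf (gT : finGroupType) (G : {set gT}) (e : nat -> gT) ks lambda F :
    group_table -> code_pdf ks lambda F ->
    (forall i j, (i < n)%N -> (j < n)%N -> e i * e j = e (mul i j)) ->
    G = decode e (iota 0 n) -> #|G| = n -> n = (2 * lambda)%N ->
  hadamard_pdf_exists G ks lambda.
Proof.
move=> table pdfF eM defG cardG n_2lambda; split; first by rewrite cardG.
exists (map (decode e) F); rewrite defG; apply: is_pdf_decode => //.
apply/mkseq_uniqP/card_uniqP; rewrite size_mkseq -{2}cardG defG.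
by apply: eq_card => x; rewrite inE.
Qed.

End Codes.

Section PairGroup.
Variables gT1 gT2 : finGroupType.
Implicit Types (u : gT1) (v : gT2).

Lemma mulg_pair u v u' v' : (u, v) * (u', v') = (u * u', v * v').
Proof. by []. Qed.

Lemma conjg_pair u v u' v' : (u, v) ^ (u', v') = (u ^ u', v ^ v').
Proof. by []. Qed.

Lemma expg_pair u v k : (u, v) ^+ k = (u ^+ k, v ^+ k).
Proof. by elim: k => // k IHk; rewrite !expgS IHk. Qed.

End PairGroup.

Section Metacyclic.
Variables (gT : finGroupType) (a b : gT) (m l r : nat).
Hypotheses (m_gt0 : (0 < m)%N) (l_gt0 : (0 < l)%N).
Hypotheses (a_m : a ^+ m = 1) (b_l : b ^+ l = 1) (bJa : b ^ a = b ^+ r).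

Definition metacyclic_elt (k : nat) : gT := a ^+ (k %/ l) * b ^+ (k %% l).

Definition metacyclic_mul (i j : nat) : nat :=
  ((i %/ l + j %/ l) %% m * l + (i %% l * r ^ (j %/ l) + j %% l) %% l)%N.

Lemma expg_conj_expg p q : (b ^+ p) ^ (a ^+ q) = b ^+ (p * r ^ q).
Proof.
elim: q => [|q IHq]; first by rewrite conjg1 expn0 muln1.
by rewrite expgSr conjgM IHq conjXg bJa -!expgM expnS mulnCA mulnC.
Qed.

Lemma metacyclic_mulE i j :
  metacyclic_elt i * metacyclic_elt j = metacyclic_elt (metacyclic_mul i j).
Proof.
rewrite /metacyclic_elt /metacyclic_mul divnMDmod // modnMDmod.
rewrite [in RHS](expg_mod _ b_l) (expg_mod _ a_m) !expgD -expg_conj_expg.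
by rewrite /conjg !mulgA mulgK.
Qed.

Lemma metacyclic_decode :
  decode metacyclic_elt (iota 0 (m * l)) = <[a]> <*> <[b]>.
Proof.
have nba : <[a]> \subset 'N(<[b]>) by rewrite cycle_subG inE -cycleJ bJa cycleX.
rewrite norm_joinEl //; apply/setP => x; rewrite inE.
apply/mapP/mulsgP => [[k _ ->]|[_ _ /cycleP[q ->] /cycleP[p ->] ->]].
  by exists (a ^+ (k %/ l)) (b ^+ (k %% l)); rewrite ?mem_cycle.
exists (q %% m * l + p %% l)%N; last first.
  by rewrite /metacyclic_elt divnMDmod // modnMDmod (expg_mod _ a_m) (expg_mod _ b_l).
by rewrite mem_iota /= -ltn_divLR // divnMDmod // ltn_mod.
Qed.

End Metacyclic.

Definition blocks_C3_C8 : seq (seq nat) :=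
  [:: [:: 12]; [:: 0]; [:: 5]; [:: 10; 9]; [:: 19; 6];
      [:: 1; 2; 3; 4; 7; 8; 11; 13; 14; 15; 16; 17; 18; 20; 21; 22; 23]]%N.

Lemma code_pdf_C3_C8 :
  group_table 24 (metacyclic_mul 8 3 2) &&
  code_pdf 24 (metacyclic_mul 8 3 2) ks_1_1_1_2_2_17 12 blocks_C3_C8.
Proof. by vm_compute. Qed.

Lemma pdf_C3_C8 (gT : finGroupType) (G : {group gT}) :
    G \isog Grp (a : b : a ^+ 8, b ^+ 3, a * b^-1 = b * a) ->
  hadamard_pdf_exists G ks_1_1_1_2_2_17 12.
Proof.
move=> isoG; have /existsP[[a b]] := isoGrp_hom isoG.
rewrite /= !xpair_eqE => /and4P[/eqP defG /eqP a8 /eqP b3 /eqP ab].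
have bJa : b ^ a = b ^+ 2.
  by apply/eqP; rewrite /conjg -ab mulKg eq_invg_mul -expgS b3.
have decodeG : G = decode (metacyclic_elt a b 3) (iota 0 24) :> {set gT}.
  by rewrite (metacyclic_decode _ _ a8 b3 bJa) // -defG.
have Z8_dvdG : (8 %| #|G|)%N.
  rewrite (_ : 8%N = #|[set: 'Z_8]|); last by rewrite cardsT card_ord.
  apply: card_homg; rewrite (isoG _ [set: 'Z_8]%G).
  apply/existsP; exists (Zp1, 1); rewrite /= !xpair_eqE cycle1 joingG1 /= -Zp_cycle eqxx.
  by rewrite invg1 mulg1 mul1g.
have D6_dvdG : (6 %| #|G|)%N.
  rewrite (_ : 6%N = #|'D_(3.*2)|); last by rewrite card_dihedral.
  apply: card_homg; rewrite (isoG _ 'D_(3.*2)%G).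
  have /existsP[[x y]] := isoGrp_hom (Grp_dihedral (isT : 1 < 3)).
  rewrite /= !xpair_eqE => /and4P[/eqP defD x3 /eqP y2 /eqP xy].
  apply/existsP; exists (y, x); rewrite /= !xpair_eqE joingC defD x3 eqxx.
  by rewrite (_ : 8 = 2 * 4)%N // expgM y2 expg1n -xy /conjg mulKVg !eqxx.
have cardG : #|G| = 24%N.
  apply/eqP; rewrite eqn_leq; apply/andP; split.
    by rewrite decodeG (leq_trans (card_decode_le _ _)) ?size_iota.
  by apply: dvdn_leq; rewrite // -[24%N]/(lcmn 8 6) dvdn_lcm Z8_dvdG.
have mulE := metacyclic_mulE (isT : 0 < 3) a8 b3 bJa.
case/andP: code_pdf_C3_C8 => table pdfF.
exact: code_hadamard_pdf table pdfF (fun i j _ _ => mulE i j) decodeG cardG _.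
Qed.

Definition blocks_Z3_D8 : seq (seq nat) :=
  [:: [:: 5]; [:: 11]; [:: 7]; [:: 6; 20]; [:: 2; 18];
      [:: 0; 1; 3; 4; 8; 9; 10; 12; 13; 14; 15; 16; 17; 19; 21; 22; 23]]%N.

Lemma code_pdf_Z3_D8 :
  group_table 24 (metacyclic_mul 2 12 7) &&
  code_pdf 24 (metacyclic_mul 2 12 7) ks_1_1_1_2_2_17 12 blocks_Z3_D8.
Proof. by vm_compute. Qed.

Lemma pdf_Z3_D8 : hadamard_pdf_exists [set: ('Z_3 * gsort 'D_8)%type] ks_1_1_1_2_2_17 12.
Proof.
have /existsP[[x y]] := isoGrp_hom (Grp_dihedral (isT : 1 < 4)).
rewrite /= !xpair_eqE => /and4P[/eqP defD /eqP x4 /eqP y2 /eqP xy].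
pose z : 'Z_3 := Zp1; have z3 : z ^+ 3 = 1 by apply/eqP; rewrite -order_dvdn order_Zp1.
(* [a] and [b] exhibit Z_3 x D_8 as the metacyclic group C_12 x| C_2. *)
pose a : 'Z_3 * gsort 'D_8 := (1, y); pose b : 'Z_3 * gsort 'D_8 := (z, x).
have a2 : a ^+ 2 = 1 by rewrite expg_pair expg1n y2.
have b12 : b ^+ 12 = 1.
  by rewrite expg_pair -(expg_mod _ z3) -(expg_mod _ x4).
have bJa : b ^ a = b ^+ 7.
  rewrite expg_pair -(expg_mod _ z3) -(expg_mod _ x4) conjg_pair xy /conjg invg1 mulg1 mul1g.
  by congr (_, _); apply/eqP; rewrite eq_invg_mul -expgS x4.
have genT : <[a]> <*> <[b]> = [set: 'Z_3 * gsort 'D_8].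
  apply/eqP; rewrite eqEsubset subsetT; apply/subsetP => -[u v] _.
  have /cycleP[i ->] : u \in <[z]> by rewrite -Zp_cycle inE.
  have nxy : <[y]> \subset 'N(<[x]>) by rewrite cycle_subG inE -cycleJ xy cycleV.
  have : v \in <[y]> * <[x]> by rewrite -norm_joinEl // joingC defD inE.
  case/mulsgP=> _ _ /cycleP[q ->] /cycleP[p ->] ->.
  have b4 : b ^+ 4 = (z, 1) by rewrite expg_pair -(expg_mod 4 z3) x4.
  have b9 : b ^+ 9 = (1, x) by rewrite expg_pair -(expg_mod 9 z3) -(expg_mod 9 x4).
  have -> : (z ^+ i, y ^+ q * x ^+ p) = (b ^+ 4) ^+ i * a ^+ q * (b ^+ 9) ^+ p.
    by rewrite b4 b9 !expg_pair !expg1n !mulg_pair /= !mulg1 mul1g.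
  have a_ab : a \in <[a]> <*> <[b]> by rewrite mem_gen // inE cycle_id.
  have b_ab : b \in <[a]> <*> <[b]> by rewrite mem_gen // inE cycle_id orbT.
  by rewrite !groupM ?groupX.
have decodeT := etrans (metacyclic_decode (isT : 0 < 2) (isT : 0 < 12) a2 b12 bJa) genT.
have mulE := metacyclic_mulE (isT : 0 < 12) a2 b12 bJa.
case/andP: code_pdf_Z3_D8 => table pdfF.
have cardT : #|[set: 'Z_3 * gsort 'D_8]| = 24%N.
  by rewrite cardsT card_prod card_ord -cardsT (card_dihedral (isT : 1 < 4)).
exact: code_hadamard_pdf table pdfF (fun i j _ _ => mulE i j) (esym decodeT) cardT _.
Qed.

Local Notation quad := (nat * nat * nat * nat)%type.

Definition quad_mul (t t' : quad) : quad :=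
  let: (a, b, c, d) := t in let: (a', b', c', d') := t' in
  ((a * a' + b * c') %% 3, (a * b' + b * d') %% 3,
   (c * a' + d * c') %% 3, (c * b' + d * d') %% 3)%N.

Definition quad_det (t : quad) : nat :=
  let: (a, b, c, d) := t in ((a * d + 2 * (b * c)) %% 3)%N.

Definition quad_lt3 (t : quad) : bool :=
  let: (a, b, c, d) := t in [&& a < 3, b < 3, c < 3 & d < 3]%N.

Lemma quad_det_lt3 t : (quad_det t < 3)%N.
Proof. by case: t => [[[a b] c] d]; apply: ltn_pmod. Qed.

Section QuadMatrix.
Local Open Scope ring_scope.

Definition mx_of_quad (t : quad) : 'M['F_3]_2 :=
  let: (a, b, c, d) := t in
  \matrix_(i < 2, j < 2)
    (if i == 0 :> nat then (if j == 0 :> nat then a else b)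
     else (if j == 0 :> nat then c else d))%:R.

Definition quad_of_mx (M : 'M['F_3]_2) : quad :=
  (val (M 0 0), val (M 0 1), val (M 1 0), val (M 1 1)).

Lemma val_F3 n : val (n%:R : 'F_3) = (n %% 3)%N.
Proof. exact: val_Fp_nat. Qed.

Lemma F3_natr_mod n : (n %% 3)%:R = n%:R :> 'F_3.
Proof. by apply: val_inj; rewrite /= !val_F3 modn_mod. Qed.

Lemma mx_of_quadM t t' : mx_of_quad t *m mx_of_quad t' = mx_of_quad (quad_mul t t').
Proof.
case: t => [[[a b] c] d]; case: t' => [[[a' b'] c'] d'].
apply/matrixP => i j; rewrite !mxE big_ord_recr big_ord1 /= !mxE.
by case: i => [[|[|//]] ?]; case: j => [[|[|//]] ?]; rewrite /= F3_natr_mod natrD !natrM.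
Qed.

Lemma F3_oppr_nat n : - n%:R = (2 * n)%:R :> 'F_3.
Proof.
apply/eqP; rewrite eq_sym -subr_eq0 opprK -natrD; apply/eqP/val_inj.
by rewrite /= val_F3; lia.
Qed.

Lemma det_mx_of_quad t : \det (mx_of_quad t) = (quad_det t)%:R.
Proof.
case: t => [[[a b] c] d]; rewrite (expand_det_row _ ord0) big_ord_recr big_ord1 /=.
rewrite /cofactor !det_mx11 !mxE /= expr0 expr1 mul1r mulN1r mulrN -!natrM.
by rewrite F3_natr_mod natrD F3_oppr_nat.
Qed.

Lemma val_F3K (x : 'F_3) : (val x)%:R = x.
Proof. by apply: val_inj; rewrite /= val_F3 modn_small ?ltn_ord. Qed.

Lemma quad_of_mxK : cancel quad_of_mx mx_of_quad.
Proof.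
move=> M; apply/matrixP => i j; rewrite mxE.
by case: i j => [[|[|//]] ?] [[|[|//]] ?]; rewrite /= val_F3K; congr (M _ _); apply: val_inj.
Qed.

Lemma mx_of_quadK t : quad_lt3 t -> quad_of_mx (mx_of_quad t) = t.
Proof.
by case: t => [[[a b] c] d] /and4P[? ? ? ?]; rewrite /quad_of_mx !mxE /= !val_F3 !modn_small.
Qed.

End QuadMatrix.

Definition quad1 : quad := (1, 0, 0, 1)%N.

Definition pairs3 : seq (nat * nat) := [seq (i, j) | i <- iota 0 3, j <- iota 0 3].

Definition quads3 : seq quad := [seq (p.1, p.2, q.1, q.2) | p <- pairs3, q <- pairs3].

(* The identity comes first: code 0 must be the identity. *)
Definition sl23_quads : seq quad :=
  quad1 :: [seq t <- quads3 | (quad_det t == 1%N) && (t != quad1)].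

Lemma mem_quads3 t : (t \in quads3) = quad_lt3 t.
Proof.
case: t => [[[a b] c] d]; apply/allpairsP/and4P => [[[[i j] [k l]]]|[a3 b3 c3 d3]].
  case=> /allpairsP[[? ?] [i3 j3 [-> ->]]] /allpairsP[[? ?] [k3 l3 [-> ->]]].
  by case=> -> -> -> ->; move: i3 j3 k3 l3; rewrite !mem_iota.
by exists ((a, b), (c, d)); split; rewrite ?allpairs_f ?mem_iota.
Qed.

Lemma mem_sl23_quads t : (t \in sl23_quads) = quad_lt3 t && (quad_det t == 1%N).
Proof. by rewrite inE mem_filter mem_quads3; case: eqP => [->|_] //=; rewrite andbT andbC. Qed.

Lemma sl23_quads_table :
  [&& size sl23_quads == 24, uniq sl23_quads &
      all (fun t => all (fun t' => quad_mul t t' \in sl23_quads) sl23_quads) sl23_quads]%N.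
Proof. by vm_compute. Qed.

Definition sl23_quad (k : nat) : quad := nth quad1 sl23_quads k.

Definition sl23_elt (k : nat) : {'GL_2(3)} :=
  insubd (1 : {'GL_2(3)}) (mx_of_quad (sl23_quad k)).

Definition sl23_mul (i j : nat) : nat :=
  index (quad_mul (sl23_quad i) (sl23_quad j)) sl23_quads.

Lemma sl23_quad_spec k :
  (k < 24)%N -> quad_lt3 (sl23_quad k) && (quad_det (sl23_quad k) == 1%N).
Proof.
case/and3P: sl23_quads_table => /eqP size24 _ _ lt_k.
by rewrite -mem_sl23_quads mem_nth ?size24.
Qed.

Lemma sl23_eltE k : (k < 24)%N -> GLval (sl23_elt k) = mx_of_quad (sl23_quad k).
Proof.
case/sl23_quad_spec/andP => _ /eqP det1; rewrite /sl23_elt insubdK //.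
by rewrite unitmxE det_mx_of_quad det1 GRing.unitr1.
Qed.

Lemma sl23_mulE i j :
  (i < 24)%N -> (j < 24)%N -> sl23_elt i * sl23_elt j = sl23_elt (sl23_mul i j).
Proof.
case/and3P: sl23_quads_table => /eqP size24 _ /allP closed lt_i lt_j.
have quad_mem k : (k < 24)%N -> sl23_quad k \in sl23_quads.
  by move=> lt_k; rewrite mem_nth ?size24.
have mem_ij : quad_mul (sl23_quad i) (sl23_quad j) \in sl23_quads.
  by have /allP := closed _ (quad_mem i lt_i); apply; apply: quad_mem.
apply: val_inj; rewrite -[val _]/(GLval _) -[val (sl23_elt _)]/(GLval _) GL_MxE.
by rewrite !sl23_eltE ?mx_of_quadM /sl23_quad ?nth_index // -size24 index_mem.
Qed.

Lemma SL23_decode : SL23 = decode sl23_elt (iota 0 24).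
Proof.
case/and3P: sl23_quads_table => /eqP size24 _ _.
apply/setP => g; rewrite /decode !in_set; apply/idP/mapP => [det1|[k]]; last first.
  rewrite mem_iota => /= lt_k ->; rewrite sl23_eltE // det_mx_of_quad.
  by case/andP: (sl23_quad_spec lt_k) => _ /eqP ->.
have g_mem : quad_of_mx (GLval g) \in sl23_quads.
  rewrite mem_sl23_quads; apply/andP; split; first by rewrite /= !ltn_ord.
  have : ((quad_det (quad_of_mx (GLval g)))%:R = 1 :> 'F_3)%R.
    by rewrite -det_mx_of_quad quad_of_mxK; apply/eqP.
  by move/(congr1 val); rewrite val_F3 modn_small ?quad_det_lt3 // => ->.
have lt_g : (index (quad_of_mx (GLval g)) sl23_quads < 24)%N by rewrite -size24 index_mem.
exists (index (quad_of_mx (GLval g)) sl23_quads); first by rewrite mem_iota.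
apply: val_inj; rewrite -[val _]/(GLval _) -[val (sl23_elt _)]/(GLval _) sl23_eltE //.
by rewrite /sl23_quad nth_index // quad_of_mxK.
Qed.

Lemma sl23_elt_inj : {in gtn 24 &, injective sl23_elt}.
Proof.
case/and3P: sl23_quads_table => /eqP size24 quads_uniq _ i j lt_i lt_j.
have lt3 k : (k < 24)%N -> quad_lt3 (sl23_quad k) by case/sl23_quad_spec/andP.
move/(congr1 (fun g : {'GL_2(3)} => quad_of_mx (GLval g))).
by rewrite /= !sl23_eltE // !mx_of_quadK ?lt3 // => /eqP; rewrite nth_uniq ?size24 // => /eqP.
Qed.

Lemma card_SL23 : #|SL23| = 24%N.
Proof. by rewrite SL23_decode (card_decode sl23_elt_inj) ?iota_uniq ?size_iota. Qed.

Definition blocks_SL23 : seq (seq nat) :=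
  [:: [:: 16]; [:: 8]; [:: 5]; [:: 7; 11]; [:: 4; 23];
      [:: 0; 1; 2; 3; 6; 9; 10; 12; 13; 14; 15; 17; 18; 19; 20; 21; 22]]%N.

Lemma code_pdf_SL23 :
  group_table 24 sl23_mul && code_pdf 24 sl23_mul ks_1_1_1_2_2_17 12 blocks_SL23.
Proof. by vm_compute. Qed.

Lemma pdf_SL23 : hadamard_pdf_exists SL23 ks_1_1_1_2_2_17 12.
Proof.
case/andP: code_pdf_SL23 => table pdfF.
exact: code_hadamard_pdf table pdfF sl23_mulE SL23_decode card_SL23 _.
Qed.

Theorem mainTheorem10 :
  (* (a) C_3 x| C_8 = < a, b | a^8 = b^3 = 1, a b^-1 = b a > *)
  (forall (gT : finGroupType) (G : {group gT}),
      G \isog Grp (a : b : a ^+ 8, b ^+ 3, a * b^-1 = b * a) ->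
      hadamard_pdf_exists G ks_1_1_1_2_2_17 12)
  /\
  (* (b) SL(2,3) *)
  hadamard_pdf_exists SL23 ks_1_1_1_2_2_17 12
  /\
  (* (c) Z_3 x D_8, D_8 the dihedral group of order 8 *)
  hadamard_pdf_exists [set: ('Z_3 * gsort 'D_8)%type] ks_1_1_1_2_2_17 12.
Proof.
split; first exact: pdf_C3_C8.
by split; [exact: pdf_SL23 | exact: pdf_Z3_D8].
Qed.
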